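(* Let $b\ge1$, $k\in\mathbb{N}$, and let $A\subseteq\mathbb{N}$ with $\min(A)=0$ and $\max(A)\le k$. Let $f\in\mathcal{M}^b$ have set-array representation $(A,\emptyset,\ldots,\emptyset)$. Then $d(f)\le d([k]_b)$, and the inequality is strict for $f\neq[k]_b$.
   Context: $\mathbb{N}=\{0,1,\ldots\}$, $[k]=\{0,\ldots,k\}$. $\mathcal{M}^b$ is the set of finitely supported functions $f:\mathbb{N}\to\{0,\ldots,b\}$; its set-array representation is $(A_1,\ldots,A_b)$ with $A_i=\{a:f(a)\ge i\}$. Multiset addition is coordinatewise on set arrays: $(A_i)_i+(B_i)_i=(A_i+B_i)_i$, with $S+T=\{s+t:s\in S,t\in T\}$ and $S+\emptyset=\emptyset$. $g$ is a divisor of $f$ if $f=g+h$ for some $h\in\mathcal{M}^b$; $d(f)$ is the number of divisors of $f$. $[k]_b$ is the multiset with set-array representation $([k],\emptyset,\ldots,\emptyset)$. *)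

From mathcomp Require Import all_boot.
From mathcomp Require Import finmap zify.
Set Implicit Arguments. Unset Strict Implicit. Unset Printing Implicit Defensive.
Local Open Scope fset_scope.

Definition mset := {fsfun nat -> nat with 0%N}.

Definition inM (b : nat) (f : mset) : Prop := forall a : nat, (f a <= b)%N.

(* The i-th set of the set-array representation: A_i = {a : f(a) >= i}. *)
Definition layer (f : mset) (i : nat) : nat -> Prop := fun a => (i <= f a)%N.

Definition sumset (S T : nat -> Prop) : nat -> Prop :=
  fun n => exists s t, S s /\ T t /\ n = (s + t)%N.

(* f = g + h in M^b : coordinatewise sumsets of the set arrays (i = 1..b). *)
Definition is_msum (b : nat) (f g h : mset) : Prop :=
  forall i, (1 <= i <= b)%N ->
    forall n, layer f i n <-> sumset (layer g i) (layer h i) n.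

Definition mdivisor (b : nat) (g f : mset) : Prop :=
  inM b g /\ exists h, inM b h /\ is_msum b f g h.

Definition num_divisors (b : nat) (f : mset) (n : nat) : Prop :=
  exists s : seq mset, uniq s /\ size s = n /\ forall g, g \in s <-> mdivisor b g f.

(* [k]_b : set-array ([k], emptyset, ..., emptyset), i.e. indicator of {0..k}. *)
Definition kset (k : nat) : mset :=
  [fsfun x in [fset y | y in iota 0 k.+1] => 1%N | 0%N].

Lemma ksetE k a : kset k a = (a <= k)%N.
Proof.
rewrite /kset fsfunE.
have -> : (a \in [fset y | y in iota 0 k.+1]) = (a <= k)%N.
  apply/imfsetP/idP => [[y /=]|H]; first by rewrite ?inE mem_iota => H Ha; subst a; lia.
  by exists a => //=; rewrite ?inE mem_iota; lia.
by case: (a <= k)%N.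
Qed.

From mathcomp Require Import all_boot.
From mathcomp Require Import finmap zify.
From Stdlib Require Import Classical.
Set Implicit Arguments. Unset Strict Implicit. Unset Printing Implicit Defensive.
Local Open Scope fset_scope.
Local Open Scope nat_scope.

(* A divisor g of the indicator f of A has its support inside A, contains 0,
   and every point of A lies at most k - m above a point of its support, where
   m is the largest point of the support.  Setting g to 1 on the points of
   [0, m] outside A therefore gives a divisor of [k]_b, with cofactor
   [k - m]_b.  This map is injective on the divisors of f, and when some j <= k
   is missing from A, the divisor [j]_b of [k]_b is not in its image. *)

Lemma exists_uniq_filter (T : eqType) (P : T -> Prop) (u : seq T) :
  exists s, uniq s /\ forall x, x \in s <-> x \in u /\ P x.
Proof.
elim: u => [|y u [s [us sE]]].
  by exists [::]; split => // x; rewrite in_nil; split => // -[].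
have [Py|nPy] := classic (P y).
  exists (undup (y :: s)); split; first exact: undup_uniq.
  move=> x; rewrite mem_undup !in_cons; split.
    by case/predU1P => [->|/sE[xu Px]]; rewrite ?eqxx ?xu ?orbT.
  by case=> /predU1P[->|xu] Px; rewrite ?eqxx //; apply/orP; right; apply/sE.
exists s; split => // x; rewrite sE in_cons.
split => [[xu Px]|[/predU1P[->|xu] Px]] //; first by rewrite xu orbT.
Qed.

Lemma uniq_ltn_size_map_in (T U : eqType) (s : seq T) (t : seq U) (phi : T -> U) y :
  uniq s -> {in s &, injective phi} -> {subset map phi s <= t} ->
  y \in t -> y \notin map phi s -> (size s < size t).
Proof.
move=> us phi_inj st yt yphi; rewrite -(size_map phi).
apply: (uniq_leq_size (s1 := y :: map phi s)) => [|z].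
  by rewrite /= yphi map_inj_in_uniq.
by rewrite in_cons => /predU1P[->|/st].
Qed.

Definition mset_upto (F : nat -> nat) (N : nat) : mset :=
  [fsfun a in [fset x | x in iota 0 N] => F a | 0].

Lemma mset_uptoE F N a : mset_upto F N a = if (a < N) then F a else 0.
Proof.
rewrite /mset_upto fsfunE.
have -> // : (a \in [fset x | x in iota 0 N]) = (a < N).
by apply/imfsetP/idP => [[x /=]|aN]; [rewrite mem_iota => ? -> | exists a; rewrite /= ?mem_iota].
Qed.

Definition bounded_msets (b k : nat) : seq mset :=
  [seq mset_upto (fun a => F (inord a)) k.+1 | F : {ffun 'I_k.+1 -> 'I_b.+1}].

Lemma mem_bounded_msets b k (g : mset) :
  inM b g -> (forall a, (k < a) -> g a = 0) -> g \in bounded_msets b k.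
Proof.
move=> gb gk; apply/mapP; exists [ffun i : 'I_k.+1 => inord (g i) : 'I_b.+1].
  by rewrite mem_enum.
apply/fsfunP => a; rewrite mset_uptoE; case: ltnP => ak; last by rewrite gk.
by rewrite ffunE (inordK ak) inordK // ltnS.
Qed.

Lemma mdivisor_layer1 b (g f : mset) :
  0 < b -> mdivisor b g f ->
  exists h : mset, forall n, layer f 1 n <-> sumset (layer g 1) (layer h 1) n.
Proof. by move=> b_gt0 [_ [h [_ fgh]]]; exists h; apply: fgh; rewrite leqnn. Qed.

Lemma mdivisor_supp_le b k (f g : mset) x a :
  0 < b -> 0 < f x -> (forall a, 0 < f a -> a <= k) ->
  mdivisor b g f -> 0 < g a -> a <= k.
Proof.
move=> b_gt0 fx fk /(mdivisor_layer1 b_gt0)[h fgh] ga.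
have [s [t [_ [ht _]]]] := (fgh x).1 fx.
have /fk : 0 < f (a + t) by apply/(fgh _).2; exists a, t.
by apply: leq_trans; rewrite leq_addr.
Qed.

Lemma num_divisors_exists b k (f : mset) :
  0 < b -> (exists x, 0 < f x) -> (forall a, 0 < f a -> a <= k) ->
  exists n, num_divisors b f n.
Proof.
move=> b_gt0 [x fx] fk.
have [s [us sE]] := exists_uniq_filter (mdivisor b ^~ f) (bounded_msets b k).
exists (size s), s; do 2!split=> //.
move=> g; rewrite sE; split=> [[] //|gf]; split=> //.
apply: mem_bounded_msets; first by case: gf.
move=> a ka; apply/eqP; rewrite -leqn0 leqNgt; apply/negP => ga.
by have := mdivisor_supp_le b_gt0 fx fk gf ga; rewrite leqNgt ka.
Qed.

Definition supp_max (g : mset) : nat := \max_(a <- finsupp g) a.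

Lemma leq_supp_max (g : mset) a : 0 < g a -> a <= supp_max g.
Proof. by move=> ga; apply: (leq_bigmax_seq (F := id)); rewrite // mem_finsupp -lt0n. Qed.

Lemma supp_max_gt0 (g : mset) : 0 < g 0 -> 0 < g (supp_max g).
Proof.
move=> g0; rewrite /supp_max big_seq; elim/big_ind: _ => // [x y gx gy|a].
  by rewrite /maxn; case: ifP.
by rewrite mem_finsupp lt0n.
Qed.

Lemma kset_divisor b k m (g : mset) :
  inM b g -> m <= k -> 0 < g m -> (forall a, 0 < g a -> a <= m) ->
  (forall n, n <= m -> exists2 x, x <= n <= x + (k - m) & 0 < g x) ->
  mdivisor b g (kset k).
Proof.
move=> gb mk gm gsupp gaps; have b_gt0 : 0 < b := leq_trans gm (gb m).
split=> //; exists (kset (k - m)); split=> [a|i /andP[i_gt0 _] n].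
  by rewrite ksetE; case: (a <= k - m).
rewrite /layer /sumset ksetE.
have [i_gt1|] := ltnP 1 i.
  (* the layers i >= 2 of [k]_b and [k - m]_b are empty *)
  split=> [|[s [t [_ [+ _]]]]]; rewrite ?ksetE; [case: (n <= k) | case: (t <= k - m)]; lia.
move=> i_le1; have -> : i = 1 by lia.
rewrite lt0b; split=> [nk|[s [t [gs [+ ->]]]]]; last first.
  by rewrite ksetE lt0b => tk; have := gsupp s gs; lia.
have [nm|mn] := leqP n m.
  have [x /andP[xn nx] gx] := gaps n nm.
  by exists x, (n - x); rewrite ksetE lt0b; do 2!split=> //; lia.
by exists m, (n - m); rewrite ksetE lt0b; do 2!split=> //; lia.
Qed.

Lemma kset_kset_divisor b j k : 0 < b -> j <= k -> mdivisor b (kset j) (kset k).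
Proof.
move=> b_gt0 jk; apply: (kset_divisor _ jk) => [a|||n nj].
- by rewrite ksetE; case: (a <= j).
- by rewrite ksetE leqnn.
- by move=> a; rewrite ksetE lt0b.
- by exists n; rewrite ?leqnn ?leq_addr // ksetE nj.
Qed.

Section IndicatorDivisors.

Variables (b k : nat) (A : {fset nat}) (f : mset).
Hypotheses (b_gt0 : 0 < b) (A0 : 0 \in A) (A_le_k : forall a, a \in A -> a <= k).
Hypothesis fE : forall a, f a = (a \in A) :> nat.

Lemma layer_indicator n : layer f 1 n <-> n \in A.
Proof. by rewrite /layer fE lt0b. Qed.

Lemma indicator_divisor_supp g :
  mdivisor b g f -> 0 < g 0 /\ (forall a, 0 < g a -> a \in A).
Proof.
move=> /(mdivisor_layer1 b_gt0)[h fgh].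
have [s [t [gs [ht /esym/eqP]]]] := (fgh 0).1 ((layer_indicator _).2 A0).
rewrite addn_eq0 => /andP[/eqP s0 /eqP t0]; subst s t.
by split=> // a ga; apply/layer_indicator/(fgh a).2; exists a, 0; rewrite addn0.
Qed.

Lemma indicator_divisor_gaps g n : mdivisor b g f -> n \in A ->
  exists2 x, x <= n <= x + (k - supp_max g) & 0 < g x.
Proof.
move=> gf nA; have [g0 gA] := indicator_divisor_supp gf.
have [h fgh] := mdivisor_layer1 b_gt0 gf.
have [s [t [gs [ht ->]]]] := (fgh n).1 ((layer_indicator n).2 nA).
have /A_le_k : (supp_max g + t) \in A.
  by apply/layer_indicator/(fgh _).2; exists (supp_max g), t; rewrite /layer supp_max_gt0.
by exists s => //; lia.
Qed.

Definition fill_gaps (g : mset) : mset :=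
  mset_upto (fun a => if a \in A then g a else 1) (supp_max g).+1.

Lemma fill_gaps_id g a : mdivisor b g f -> a \in A -> fill_gaps g a = g a.
Proof.
move=> gf aA; rewrite mset_uptoE aA; case: ltnP => // ga; apply/esym/eqP.
by rewrite -leqn0 leqNgt; apply: contraTN ga => /leq_supp_max; rewrite -ltnNge ltnS.
Qed.

Lemma indicator_divisor_off g a : mdivisor b g f -> a \notin A -> g a = 0.
Proof.
move=> /indicator_divisor_supp[_ gA] aA.
by apply/eqP; rewrite -leqn0 leqNgt; apply: contra aA => /gA.
Qed.

Lemma fill_gaps_inj g1 g2 :
  mdivisor b g1 f -> mdivisor b g2 f -> fill_gaps g1 = fill_gaps g2 -> g1 = g2.
Proof.
move=> g1f g2f eq12; apply/fsfunP => a; have [aA|aA] := boolP (a \in A).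
  by rewrite -(fill_gaps_id g1f aA) -(fill_gaps_id g2f aA) eq12.
by rewrite !indicator_divisor_off.
Qed.

Lemma fill_gaps_divisor g : mdivisor b g f -> mdivisor b (fill_gaps g) (kset k).
Proof.
move=> gf; have [g0 gA] := indicator_divisor_supp gf.
have gm := supp_max_gt0 g0.
have fill_pos a : a <= supp_max g -> 0 < g a -> 0 < fill_gaps g a.
  by move=> am ga; rewrite fill_gaps_id ?gA.
apply: (kset_divisor (m := supp_max g)).
- move=> a; rewrite mset_uptoE; case: ifP => // _; case: ifP => // _; exact: gf.1.
- exact: A_le_k (gA _ gm).
- exact: fill_pos (leqnn _) gm.
- by move=> a; rewrite mset_uptoE ltnS; case: ifP.
move=> n nm; have [nA|nA] := boolP (n \in A).
  have [x /andP[xn nx] gx] := indicator_divisor_gaps gf nA.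
  by exists x; rewrite ?xn ?nx ?fill_pos //; apply: leq_trans nm.
by exists n; rewrite ?leqnn ?leq_addr // mset_uptoE ltnS nm (negPf nA).
Qed.

Lemma kset_neq_fill_gaps g j : mdivisor b g f -> j \notin A -> kset j != fill_gaps g.
Proof.
move=> gf jA; apply/eqP => kj; have [g0 gA] := indicator_divisor_supp gf.
have gm := supp_max_gt0 g0.
have : fill_gaps g j = 1 by rewrite -kj ksetE leqnn.
rewrite mset_uptoE (negPf jA) ltnS; case: leqP => // jm _.
have : 0 < kset j (supp_max g) by rewrite kj fill_gaps_id ?gA.
rewrite ksetE lt0b => mj; have mE : supp_max g = j by apply/eqP; rewrite eqn_leq mj.
by move: jA; rewrite -mE gA.
Qed.

Lemma indicator_neq_kset_gap : f != kset k -> exists2 j, j <= k & j \notin A.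
Proof.
move=> fk; have [/hasP[j]|/hasPn allA] := boolP (has (fun j => j \notin A) (iota 0 k.+1)).
  by rewrite mem_iota => jk jA; exists j.
case/eqP: fk; apply/fsfunP => a; rewrite fE ksetE.
have [ak|ka] := leqP a k.
  by have := allA a; rewrite mem_iota ltnS ak negbK => ->.
by case: (boolP (a \in A)) => // /A_le_k; rewrite leqNgt ka.
Qed.

End IndicatorDivisors.

Theorem mainTheorem20 (b k : nat) (A : {fset nat}) (f : mset) :
  (1 <= b)%N ->
  0%N \in A ->
  (forall a, a \in A -> (a <= k)%N) ->
  (forall a : nat, f a = (a \in A) :> nat) ->
  exists n m : nat,
    num_divisors b f n /\ num_divisors b (kset k) m /\
    (n <= m)%N /\ (f != kset k -> (n < m)%N).
Proof.
move=> b_gt0 A0 A_le_k fE.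
have f_gt0 a : (0 < f a) = (a \in A) by rewrite fE lt0b.
have [_ [s [us [_ sE]]]] : exists n, num_divisors b f n.
  apply: (num_divisors_exists (k := k) b_gt0); first by exists 0; rewrite f_gt0.
  by move=> a; rewrite f_gt0; apply: A_le_k.
have [_ [t [ut [_ tE]]]] : exists m, num_divisors b (kset k) m.
  apply: (num_divisors_exists (k := k) b_gt0); first by exists 0; rewrite ksetE.
  by move=> a; rewrite ksetE lt0b.
exists (size s), (size t); do 2!(split; first by [exists s | exists t]).
have fill_inj : {in s &, injective (fill_gaps A)}.
  by move=> g1 g2 /sE g1f /sE g2f; apply: (fill_gaps_inj b_gt0 A0 fE).
have fill_sub : {subset map (fill_gaps A) s <= t}.
  by move=> _ /mapP[g /sE gf ->]; apply/tE/(fill_gaps_divisor b_gt0).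
split; first by rewrite -(size_map (fill_gaps A)) uniq_leq_size // map_inj_in_uniq.
case/(indicator_neq_kset_gap A_le_k fE) => j jk jA.
apply: (uniq_ltn_size_map_in us fill_inj fill_sub (y := kset j)).
  exact/tE/kset_kset_divisor.
by apply/mapP => -[g /sE gf]; apply/eqP/(kset_neq_fill_gaps b_gt0).
Qed.
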